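(* Let $\mathcal{A}$ be an ARI-algebra of matrices over a countable index set $K$, with class $W$ of $\mathcal{A}$-admissible weights, and let $\mu\in W$. Let $B$ be a matrix over $K$ such that (i) $B^\mu=\operatorname{diag}(\mu)\, B\, \operatorname{diag}(1/\mu)\in\mathcal{A}$, and (ii) $B$ is (bounded and) invertible on $\ell^2_\mu(K)$. Then $B$ is bounded and invertible on $\ell^p_w(K)$ for every $1\le p\le\infty$ and every weight of the form $w=\mu\cdot m$ with $m\in W$; in particular, $B$ is bounded and invertible on every $\ell^p(K)$, $1\le p\le \infty$.
   Context: $K$ is a countable index set. For a strictly positive weight $m=(m_k)_{k\in K}$, $\ell^p_m(K)$ is the space of sequences $c$ with $\|c\|_{\ell^p_m}=\|(m_kc_k)_k\|_{\ell^p}<\infty$. For a sequence $\mu$, $\operatorname{diag}(\mu)$ is the diagonal matrix with entries $\mu_k$, and for a matrix $B$ over $K$ and a positive weight $\mu$ one writes $B^\mu:=\operatorname{diag}(\mu)\,B\,\operatorname{diag}(1/\mu)$. An ARI-algebra is a Banach $*$-algebra $\mathcal{A}$ of matrices over $K$ (with $*$ the matrix adjoint) together with a class $W$ of positive weights on $K$ (called $\mathcal{A}$-admissible weights) such that: (ARI1) every $A\in\mathcal{A}$ is bounded on $\ell^p_m(K)$ for all $p\in[1,\infty]$ and all $m\in W$, the constant weight $1$ belongs to $W$, and $m\in W$ implies $1/m\in W$; (ARI2) $\mathcal{A}$ is inverse-closed in $\mathcal{B}(\ell^2(K))$, i.e. if $A\in\mathcal{A}$ is invertible on $\ell^2(K)$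 then $A^{-1}\in\mathcal{A}$. *)

From mathcomp Require Import all_boot all_order all_algebra finmap.
From mathcomp Require Import classical_sets boolp reals ereal esum exp.
From mathcomp.real_closed Require Import complex.

Set Implicit Arguments.
Unset Strict Implicit.
Unset Printing Implicit Defensive.
Import Order.TTheory GRing.Theory Num.Theory.
Local Open Scope ring_scope.

Section ARI.
Variables (R : realType) (K : countType).
Local Notation C := R[i].

Definition cabs (z : C) : R := ComplexField.Normc.normc z.
Definition cR (x : R) : C := (x%:C)%C.

Definition cseq := K -> C.
Definition cmatrix := K -> K -> C.
Definition weight := K -> R.

Definition HasSum (f : K -> C) (s : C) : Prop :=
  forall e : R, 0 < e -> exists F0 : {fset K}, forall F : {fset K},
    fsubset F0 F -> cabs ((\sum_(k <- F) f k) - s) < e.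

Definition abs_summable (f : K -> C) : Prop :=
  exists M : R, forall F : {fset K}, \sum_(k <- F) cabs (f k) <= M.

Definition sumK (f : K -> C) : C := xget 0 [set s | HasSum f s].

Definition mxapply (A : cmatrix) (c : cseq) : cseq :=
  fun k => sumK (fun j => A k j * c j).
Definition mxmul (A B : cmatrix) : cmatrix :=
  fun i k => sumK (fun j => A i j * B j k).
Definition mxadj (A : cmatrix) : cmatrix := fun i j => conjc (A j i).
Definition mxadd (A B : cmatrix) : cmatrix := fun i j => A i j + B i j.
Definition mxsub (A B : cmatrix) : cmatrix := fun i j => A i j - B i j.
Definition mxscale (a : C) (A : cmatrix) : cmatrix := fun i j => a * A i j.
Definition mxzero : cmatrix := fun _ _ => 0.

Definition mxconj (mu : weight) (B : cmatrix) : cmatrix :=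
  fun i j => cR (mu i) * B i j * cR ((mu j)^-1).

(* weighted l^p norm, p in [1, +oo] encoded as an extended real *)
Definition lpnorm (p : \bar R) (m : weight) (c : cseq) : \bar R :=
  match p with
  | EFin r => poweR (\esum_(k in [set: K]) (powR (m k * cabs (c k)) r)%:E) r^-1
  | +oo%E => ereal_sup ([set 0%E] `|` [set (m k * cabs (c k))%:E | k in [set: K]])
  | -oo%E => 0%E
  end.

Definition in_lp (p : \bar R) (m : weight) (c : cseq) : Prop :=
  (lpnorm p m c < +oo)%E.

Definition bounded_on (p : \bar R) (m : weight) (A : cmatrix) : Prop :=
  exists M : R, forall c, in_lp p m c ->
    (forall k, abs_summable (fun j => A k j * c j)) /\
    (lpnorm p m (mxapply A c) <= M%:E * lpnorm p m c)%E.

Definition invertible_on (p : \bar R) (m : weight) (A : cmatrix) : Prop :=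
  bounded_on p m A /\
  exists T : cseq -> cseq,
    (forall d, in_lp p m d -> in_lp p m (T d) /\ mxapply A (T d) = d) /\
    (forall c, in_lp p m c -> T (mxapply A c) = c) /\
    exists M : R, forall d, in_lp p m d ->
      (lpnorm p m (T d) <= M%:E * lpnorm p m d)%E.

Record banach_star_mx_algebra (Alg : set cmatrix) (N : cmatrix -> R) : Prop := {
  bsa_zero : Alg mxzero;
  bsa_add : forall A B, Alg A -> Alg B -> Alg (mxadd A B);
  bsa_scale : forall a A, Alg A -> Alg (mxscale a A);
  bsa_mul_def : forall A B, Alg A -> Alg B ->
    forall i k, abs_summable (fun j => A i j * B j k);
  bsa_mul : forall A B, Alg A -> Alg B -> Alg (mxmul A B);
  bsa_mulA : forall A B D, Alg A -> Alg B -> Alg D ->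
    mxmul (mxmul A B) D = mxmul A (mxmul B D);
  bsa_adj : forall A, Alg A -> Alg (mxadj A);
  bsa_norm_ge0 : forall A, Alg A -> 0 <= N A;
  bsa_norm_eq0 : forall A, Alg A -> N A = 0 -> A = mxzero;
  bsa_norm_triangle : forall A B, Alg A -> Alg B -> N (mxadd A B) <= N A + N B;
  bsa_norm_scale : forall a A, Alg A -> N (mxscale a A) = cabs a * N A;
  bsa_norm_submult : forall A B, Alg A -> Alg B -> N (mxmul A B) <= N A * N B;
  bsa_norm_adj : forall A, Alg A -> N (mxadj A) = N A;
  bsa_complete : forall u : nat -> cmatrix, (forall n, Alg (u n)) ->
    (forall e : R, 0 < e -> exists n0 : nat, forall n k : nat,
       (n0 <= n)%N -> (n0 <= k)%N -> N (mxsub (u n) (u k)) < e) ->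
    exists A, Alg A /\ forall e : R, 0 < e -> exists n0 : nat, forall n : nat,
       (n0 <= n)%N -> N (mxsub (u n) A) < e
}.

Record ARI_algebra (Alg : set cmatrix) (N : cmatrix -> R) (W : set weight) : Prop := {
  ari_banach : banach_star_mx_algebra Alg N;
  ari_weights_pos : forall m, W m -> forall k, 0 < m k;
  ari_bounded : forall A, Alg A -> forall (p : \bar R), (1 <= p)%E ->
    forall m, W m -> bounded_on p m A;
  ari_one : W (fun _ => 1);
  ari_inv : forall m, W m -> W (fun k => (m k)^-1);
  ari_inverse_closed : forall A, Alg A -> invertible_on 2%:E (fun _ => 1) A ->
    exists A', Alg A' /\ forall c, in_lp 2%:E (fun _ => 1) c ->
      mxapply A' (mxapply A c) = c /\ mxapply A (mxapply A' c) = c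
}.

End ARI.

From mathcomp Require Import all_boot all_order all_algebra finmap.
From mathcomp Require Import classical_sets boolp reals ereal esum exp.
From mathcomp.real_closed Require Import complex.
From mathcomp Require Import lra ring.

(* Conjugation by diag(mu) maps l^p_(mu m) isometrically onto l^p_m and turns
   B into B^mu, so it suffices to invert B^mu on l^p_m for every m in W.
   Since B^mu is invertible on l^2, inverse-closedness puts its inverse A'
   in the algebra, and testing on unit vectors gives A' B^mu = B^mu A' = 1
   as matrices.  Both A' and B^mu are bounded on l^oo_m, which bounds their
   weighted absolute row sums; for y in l^p_m, a subset of l^oo_m, the double
   series defining A' (B^mu y) is therefore absolutely summable and
   A' (B^mu y) = (A' B^mu) y = y, and symmetrically B^mu (A' y) = y.  The
   unweighted case is the weight m = 1/mu. *)

Set Implicit Arguments.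
Unset Strict Implicit.
Unset Printing Implicit Defensive.
Import Order.TTheory GRing.Theory Num.Theory.
Local Open Scope ring_scope.

Section ComplexModulus.
Variable R : realType.
Local Notation C := R[i].

Lemma cabs_ge0 (z : C) : 0 <= cabs z.
Proof. by case: z => a b; apply: sqrtr_ge0. Qed.

Lemma cabs0 : cabs (0 : C) = 0.
Proof. exact: ComplexField.Normc.normc0. Qed.

Lemma cabsM (x y : C) : cabs (x * y) = cabs x * cabs y.
Proof. exact: ComplexField.Normc.normcM. Qed.

Lemma cabsV (z : C) : cabs z^-1 = (cabs z)^-1.
Proof. exact: ComplexField.Normc.normcV. Qed.

Lemma cabsR (x : R) : cabs (cR x) = `|x|.
Proof. by rewrite /cabs /cR /= expr0n /= addr0 sqrtr_sqr. Qed.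

Lemma cabs_Re (z : C) : `|complex.Re z| <= cabs z.
Proof.
case: z => a b; rewrite /cabs /= -sqrtr_sqr ler_sqrt ?lerDl ?sqr_ge0 //.
by rewrite addr_ge0 // sqr_ge0.
Qed.

Lemma cabs_Im (z : C) : `|complex.Im z| <= cabs z.
Proof.
case: z => a b; rewrite /cabs /= -sqrtr_sqr ler_sqrt ?lerDr ?sqr_ge0 //.
by rewrite addr_ge0 // sqr_ge0.
Qed.

Lemma cabs_le_ReIm (z : C) : cabs z <= `|complex.Re z| + `|complex.Im z|.
Proof.
case: z => a b; rewrite /cabs /=.
have ab0 : 0 <= `|a| + `|b| by rewrite addr_ge0.
rewrite -(ger0_norm ab0) -sqrtr_sqr ler_sqrt ?sqr_ge0 //.
rewrite sqrrD !real_normK ?num_real //.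
have : 0 <= `|a| * `|b| by rewrite mulr_ge0.
by rewrite mulr2n; lra.
Qed.

Lemma ReB (x y : C) : complex.Re (x - y) = complex.Re x - complex.Re y.
Proof. by case: x; case: y. Qed.

Lemma ImB (x y : C) : complex.Im (x - y) = complex.Im x - complex.Im y.
Proof. by case: x; case: y. Qed.

Lemma Re_sum (I : Type) (s : seq I) (f : I -> C) :
  complex.Re (\sum_(k <- s) f k) = \sum_(k <- s) complex.Re (f k).
Proof.
elim: s => [|a s IH]; first by rewrite !big_nil.
by rewrite !big_cons -IH; case: (f a) => ? ?; case: (\sum_(k <- s) f k).
Qed.

Lemma Im_sum (I : Type) (s : seq I) (f : I -> C) :
  complex.Im (\sum_(k <- s) f k) = \sum_(k <- s) complex.Im (f k).
Proof.
elim: s => [|a s IH]; first by rewrite !big_nil.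
by rewrite !big_cons -IH; case: (f a) => ? ?; case: (\sum_(k <- s) f k).
Qed.

Lemma cRM (x y : R) : cR (x * y) = cR x * cR y.
Proof. exact: rmorphM. Qed.

Lemma cRV (x : R) : cR x^-1 = (cR x)^-1.
Proof. exact: fmorphV. Qed.

Lemma cR_sum (I : Type) (s : seq I) (f : I -> R) :
  cR (\sum_(k <- s) f k) = \sum_(k <- s) cR (f k).
Proof. exact: rmorph_sum. Qed.

Lemma cR_eq0 (x : R) : (cR x == 0) = (x == 0).
Proof. exact: fmorph_eq0. Qed.

End ComplexModulus.

Section RealSums.
Variables (R : realType) (K : countType).

Definition RHasSum (f : K -> R) (s : R) : Prop :=
  forall e : R, 0 < e -> exists F0 : {fset K}, forall F : {fset K},
    fsubset F0 F -> `|\sum_(k <- F) f k - s| < e.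

Lemma RHasSum_unique f s t : RHasSum f s -> RHasSum f t -> s = t.
Proof.
move=> hs ht; have [//|neq_st] := eqVneq s t; exfalso.
have e0 : 0 < `|s - t| / 2 by rewrite divr_gt0 // normr_gt0 subr_eq0.
have [F0 h0] := hs _ e0; have [F1 h1] := ht _ e0.
have := h0 (F0 `|` F1)%fset (fsubsetUl _ _).
have := h1 (F0 `|` F1)%fset (fsubsetUr _ _).
set S := \sum_(k <- _) f k => a1 a2.
have := ler_normD (s - S) (S - t); rewrite addrA subrK (distrC s S).
lra.
Qed.

Lemma ler_sum_fsubset (f : K -> R) (F G : {fset K}) :
  (forall k, 0 <= f k) -> fsubset F G -> \sum_(k <- F) f k <= \sum_(k <- G) f k.
Proof.
move=> f0 sFG.
have -> : \sum_(k <- F) f k = \sum_(k <- F) (if k \in F then f k else 0).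
  by rewrite big_seq_cond [RHS]big_seq_cond; apply: eq_bigr => k /andP[-> _].
rewrite (big_fset_incl _ sFG); last by move=> x _ /negbTE ->.
by apply: ler_sum => k _; case: ifP.
Qed.

Lemma RHasSumD f g s t : RHasSum f s -> RHasSum g t ->
  RHasSum (fun k => f k + g k) (s + t).
Proof.
move=> hs ht e e0.
have e20 : 0 < e / 2 by rewrite divr_gt0.
have [F0 h0] := hs _ e20; have [F1 h1] := ht _ e20.
exists (F0 `|` F1)%fset => F sF.
have := h0 _ (fsubset_trans (fsubsetUl _ _) sF).
have := h1 _ (fsubset_trans (fsubsetUr _ _) sF).
rewrite big_split /=.
set a := \sum_(k <- F) f k; set b := \sum_(k <- F) g k => a1 a2.
have := ler_normD (a - s) (b - t).
have -> : a - s + (b - t) = a + b - (s + t) by rewrite opprD addrACA.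
lra.
Qed.

Lemma RHasSumZ c f s : RHasSum f s -> RHasSum (fun k => c * f k) (c * s).
Proof.
move=> hs e e0.
have c10 : 0 < `|c| + 1 by rewrite ltr_wpDl.
have [F0 h0] := hs _ (divr_gt0 e0 c10); exists F0 => F sF.
have := h0 _ sF; rewrite -mulr_sumr -mulrBr normrM.
have ee : e / (`|c| + 1) * (`|c| + 1) = e by rewrite divfK // gt_eqF.
have := normr_ge0 c; have := normr_ge0 (\sum_(k <- F) f k - s).
nra.
Qed.

Lemma RHasSumB f g s t : RHasSum f s -> RHasSum g t ->
  RHasSum (fun k => f k - g k) (s - t).
Proof.
move=> hs ht; have := RHasSumD hs (RHasSumZ (-1) ht).
by rewrite mulN1r; congr RHasSum; apply: funext => k; rewrite mulN1r.
Qed.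

Lemma RHasSum0 : RHasSum (fun _ => 0) 0.
Proof. by move=> e e0; exists fset0 => F _; rewrite big1 // subr0 normr0. Qed.

Lemma RHasSum_sum (b : K -> K -> R) (r : K -> R) (s : seq K) :
  (forall j, RHasSum (b j) (r j)) ->
  RHasSum (fun l => \sum_(j <- s) b j l) (\sum_(j <- s) r j).
Proof.
move=> hb; elim: s => [|a s IH].
  rewrite big_nil; have := RHasSum0; congr RHasSum.
  by apply: funext => l; rewrite big_nil.
rewrite big_cons; have := RHasSumD (hb a) IH; congr RHasSum.
by apply: funext => l; rewrite big_cons.
Qed.

Lemma RHasSum_ub f s M : RHasSum f s ->
  (forall F : {fset K}, \sum_(k <- F) f k <= M) -> s <= M.
Proof.
move=> hs hM; rewrite leNgt; apply/negP => lt_Ms.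
have [F0 h0] := hs (s - M) ltac:(by rewrite subr_gt0).
have := h0 F0 (fsubset_refl _); have := hM F0.
set a := \sum_(k <- F0) f k => h1 h2.
have := ler_norm (s - a); rewrite -normrN opprB; lra.
Qed.

Lemma RHasSum_partial_le f s (F : {fset K}) : (forall k, 0 <= f k) ->
  RHasSum f s -> \sum_(k <- F) f k <= s.
Proof.
move=> f0 hs; rewrite leNgt; apply/negP => lt_sF.
have [F0 h0] := hs (\sum_(k <- F) f k - s) ltac:(by rewrite subr_gt0).
have := h0 (F0 `|` F)%fset (fsubsetUl _ _).
have := ler_sum_fsubset f0 (fsubsetUr F0 F).
set a := \sum_(k <- (F0 `|` F)%fset) f k => h1 h2.
have := ler_norm (a - s); lra.
Qed.

Lemma RHasSum_ge0 f s : (forall k, 0 <= f k) -> RHasSum f s -> 0 <= s.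
Proof.
by move=> f0 hs; have := RHasSum_partial_le fset0 f0 hs; rewrite big_nil.
Qed.

Lemma RHasSum_ex_ge0 f M : (forall k, 0 <= f k) ->
  (forall F : {fset K}, \sum_(k <- F) f k <= M) -> exists s, RHasSum f s.
Proof.
move=> f0 hM.
pose E : set R := fun x => exists F : {fset K}, x = \sum_(k <- F) f k.
have hE : has_sup E.
  split; first by exists 0, fset0; rewrite big_nil.
  by exists M => x [F ->].
exists (sup E) => e e0.
have [x [F0 ->] hx] := sup_adherent e0 hE.
exists F0 => F sF.
have h1 := ler_sum_fsubset f0 sF.
have h2 : \sum_(k <- F) f k <= sup E by apply: sup_upper_bound => //; exists F.
rewrite ler0_norm ?subr_le0 //; lra.
Qed.

Lemma normr_addr_ge0 (x : R) : 0 <= `|x| + x.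
Proof. by have := ler_norm (- x); rewrite normrN; lra. Qed.

Definition double_summable_with (b : K -> K -> R) (r c : K -> R) (S : R) :
  Prop :=
  [/\ forall j, RHasSum (b j) (r j), forall l, RHasSum (b^~ l) (c l),
      RHasSum r S & RHasSum c S].

Lemma RHasSum_iter_le (b : K -> K -> R) r c S S' : (forall j l, 0 <= b j l) ->
  (forall j, RHasSum (b j) (r j)) -> (forall l, RHasSum (b^~ l) (c l)) ->
  RHasSum r S -> RHasSum c S' -> S <= S'.
Proof.
move=> b0 hr hc hS hS'.
have c0 l : 0 <= c l by apply: RHasSum_ge0 (hc l) => j.
apply: (RHasSum_ub hS) => F; apply: (RHasSum_ub (RHasSum_sum F hr)) => G.
apply: (@le_trans _ _ (\sum_(l <- G) c l)); last exact: RHasSum_partial_le c0 hS'.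
by apply: ler_sum => l _; apply: RHasSum_partial_le (hc l) => j.
Qed.

Lemma RHasSum_exchange_ge0 (b : K -> K -> R) M : (forall j l, 0 <= b j l) ->
  (forall F G : {fset K}, \sum_(j <- F) \sum_(l <- G) b j l <= M) ->
  exists r c S, double_summable_with b r c S.
Proof.
move=> b0 hM.
have /choice [r hr] : forall j, exists s, RHasSum (b j) s.
  move=> j; apply: (@RHasSum_ex_ge0 _ M) => // G.
  by have := hM [fset j]%fset G; rewrite big_seq_fset1.
have /choice [c hc] : forall l, exists s, RHasSum (b^~ l) s.
  move=> l; apply: (@RHasSum_ex_ge0 _ M) => // F.
  by have := hM F [fset l]%fset; under eq_bigr do rewrite big_seq_fset1.
have r0 j : 0 <= r j by exact: RHasSum_ge0 (b0 j) (hr j).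
have c0 l : 0 <= c l by apply: RHasSum_ge0 (hc l) => j.
have [S hS] : exists S, RHasSum r S.
  apply: (@RHasSum_ex_ge0 _ M) => // F.
  by apply: (RHasSum_ub (RHasSum_sum F hr)) => G; rewrite exchange_big.
have [S' hS'] : exists S, RHasSum c S.
  apply: (@RHasSum_ex_ge0 _ M) => // G.
  exact: (RHasSum_ub (RHasSum_sum (b := fun l j => b j l) G hc)).
have eq_SS' : S = S'.
  apply: le_anti; rewrite (RHasSum_iter_le b0 hr hc hS hS') /=.
  exact: (RHasSum_iter_le (b := fun l j => b j l)).
by exists r, c, S; split=> //; rewrite eq_SS'.
Qed.

(* Reduce to the nonnegative case via [b = (|b| + b) - |b|]. *)
Lemma RHasSum_exchange (b : K -> K -> R) M :
  (forall F G : {fset K}, \sum_(j <- F) \sum_(l <- G) `|b j l| <= M) ->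
  exists r c S, double_summable_with b r c S.
Proof.
move=> hM.
have [rp [cp [Sp [hrp hcp hSp hSp']]]] :
    exists r c S, double_summable_with (fun j l => `|b j l| + b j l) r c S.
  apply: (@RHasSum_exchange_ge0 _ (M + M)) => [j l|F G].
    exact: normr_addr_ge0.
  apply: le_trans (lerD (hM F G) (hM F G)); rewrite -big_split /=.
  apply: ler_sum => j _; rewrite -big_split /=.
  by apply: ler_sum => l _; rewrite lerD // ler_norm.
have [rn [cn [Sn [hrn hcn hSn hSn']]]] :
    exists r c S, double_summable_with (fun j l => `|b j l|) r c S.
  exact: (@RHasSum_exchange_ge0 _ M).
have normK (x : R) : `|x| + x - `|x| = x by rewrite addrAC subrr add0r.
exists (fun j => rp j - rn j), (fun l => cp l - cn l), (Sp - Sn); split.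
- move=> j; have := RHasSumB (hrp j) (hrn j).
  by congr RHasSum; apply: funext => l; rewrite normK.
- move=> l; have := RHasSumB (hcp l) (hcn l).
  by congr RHasSum; apply: funext => j; rewrite normK.
- exact: RHasSumB hSp hSn.
- exact: RHasSumB hSp' hSn'.
Qed.

End RealSums.

Section ComplexSums.
Variables (R : realType) (K : countType).
Local Notation C := R[i].

Lemma HasSum_ReIm (f : K -> C) s : HasSum f s <->
  RHasSum (fun k => complex.Re (f k)) (complex.Re s) /\
  RHasSum (fun k => complex.Im (f k)) (complex.Im s).
Proof.
split=> [hs|[hRe hIm] e e0].
  split=> e e0; have [F0 h0] := hs e e0; exists F0 => F /h0.
    by rewrite -Re_sum -ReB; apply: le_lt_trans; apply: cabs_Re.
  by rewrite -Im_sum -ImB; apply: le_lt_trans; apply: cabs_Im.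
have e20 : 0 < e / 2 by rewrite divr_gt0.
have [F0 h0] := hRe _ e20; have [F1 h1] := hIm _ e20.
exists (F0 `|` F1)%fset => F sF.
have := h0 _ (fsubset_trans (fsubsetUl _ _) sF).
have := h1 _ (fsubset_trans (fsubsetUr _ _) sF).
rewrite -Re_sum -Im_sum -ReB -ImB => a1 a2.
have := cabs_le_ReIm (\sum_(k <- F) f k - s); lra.
Qed.

Lemma HasSum_unique (f : K -> C) s t : HasSum f s -> HasSum f t -> s = t.
Proof.
move=> /HasSum_ReIm[hs1 hs2] /HasSum_ReIm[ht1 ht2].
case: s t hs1 hs2 ht1 ht2 => a b [c d] /= h1 h2 h3 h4.
by rewrite (RHasSum_unique h1 h3) (RHasSum_unique h2 h4).
Qed.

Lemma HasSum_sumK (f : K -> C) s : HasSum f s -> sumK f = s.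
Proof. by move=> hs; apply: xget_unique => // t /HasSum_unique; apply. Qed.

Lemma HasSumZ (a : C) (f : K -> C) s :
  HasSum f s -> HasSum (fun k => a * f k) (a * s).
Proof.
move=> hs e e0.
have a0 := cabs_ge0 a.
have a10 : 0 < cabs a + 1 by lra.
have [F0 h0] := hs _ (divr_gt0 e0 a10); exists F0 => F sF.
have := h0 _ sF; rewrite -mulr_sumr -mulrBr cabsM.
have ee : e / (cabs a + 1) * (cabs a + 1) = e by rewrite divfK // gt_eqF.
have := cabs_ge0 (\sum_(k <- F) f k - s).
nra.
Qed.

Lemma sumK_fin (f : K -> C) (F : {fset K}) :
  (forall j, j \notin F -> f j = 0) -> sumK f = \sum_(j <- F) f j.
Proof.
move=> f0; apply: HasSum_sumK => e e0; exists F => G sG.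
by rewrite (big_fset_incl _ sG) ?subrr ?cabs0 // => x _ /f0.
Qed.

Lemma sumKZ (a : C) (f : K -> C) : sumK (fun j => a * f j) = a * sumK f.
Proof.
have [->|a0] := eqVneq a 0.
  by rewrite mul0r (@sumK_fin _ fset0) ?big_nil // => j _; rewrite mul0r.
have [[s hs]|nf] := pselect (exists s, HasSum f s).
  by rewrite (HasSum_sumK hs) (HasSum_sumK (HasSumZ a hs)).
have naf t : ~ HasSum (fun j => a * f j) t.
  move=> /(HasSumZ a^-1) haf; apply: nf; exists (a^-1 * t).
  by move: haf; congr HasSum; apply: funext => k; rewrite mulKf.
have nf' t : ~ HasSum f t by move=> ht; apply: nf; exists t.
by rewrite /sumK !xgetPN ?mulr0.
Qed.

Lemma sumKZr (a : C) (f : K -> C) : sumK (fun j => f j * a) = sumK f * a.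
Proof.
by rewrite mulrC -sumKZ; congr sumK; apply: funext => j; rewrite mulrC.
Qed.

Lemma abs_summableZ (a : C) (f : K -> C) :
  abs_summable f -> abs_summable (fun j => a * f j).
Proof.
move=> [M hM]; exists (cabs a * M) => F.
by under eq_bigr do rewrite cabsM; rewrite -mulr_sumr ler_wpM2l ?cabs_ge0.
Qed.

Lemma sumK_exchange (a : K -> K -> C) M :
  (forall F G : {fset K}, \sum_(j <- F) \sum_(l <- G) cabs (a j l) <= M) ->
  sumK (fun j => sumK (a j)) = sumK (fun l => sumK (a^~ l)).
Proof.
move=> hM.
have bound_by_cabs (p : C -> R) : (forall z, `|p z| <= cabs z) ->
    forall F G : {fset K}, \sum_(j <- F) \sum_(l <- G) `|p (a j l)| <= M.
  move=> hp F G; apply: le_trans (hM F G).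
  by apply: ler_sum => j _; apply: ler_sum => l _.
have [rRe [cRe [SRe [hrRe hcRe hSRe hSRe']]]] :=
  RHasSum_exchange (bound_by_cabs _ (@cabs_Re R)).
have [rIm [cIm [SIm [hrIm hcIm hSIm hSIm']]]] :=
  RHasSum_exchange (bound_by_cabs _ (@cabs_Im R)).
have -> : (fun j => sumK (a j)) = (fun j => (rRe j +i* rIm j)%C).
  by apply: funext => j; apply: HasSum_sumK; apply/HasSum_ReIm.
have -> : (fun l => sumK (a^~ l)) = (fun l => (cRe l +i* cIm l)%C).
  by apply: funext => l; apply: HasSum_sumK; apply/HasSum_ReIm.
by rewrite !(@HasSum_sumK _ (SRe +i* SIm)%C) //; apply/HasSum_ReIm.
Qed.

End ComplexSums.

Section WeightedLp.
Variables (R : realType) (K : countType).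
Local Notation C := R[i].
Implicit Types (p : \bar R) (m mu : weight R K) (c x : cseq R K).

Lemma eq_lpnorm p m m' c c' :
  (forall k, m k * cabs (c k) = m' k * cabs (c' k)) ->
  lpnorm p m c = lpnorm p m' c'.
Proof.
move=> h; case: p => [r| |] //=.
  by congr (poweR _ _); apply: eq_esum => k _; rewrite h.
congr (ereal_sup (_ `|` _)).
by apply/seteqP; split => x [k _ <-]; exists k => //; rewrite h.
Qed.

Lemma lpnorm_ge0 p m c : (0 <= lpnorm p m c)%E.
Proof.
case: p => [r| |] //=; first exact: poweR_ge0.
by apply: ereal_sup_ubound; left.
Qed.

Lemma lpnorm_fin_num p m c : in_lp p m c -> lpnorm p m c \is a fin_num.
Proof. by move=> hc; rewrite ge0_fin_numE // lpnorm_ge0. Qed.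

Lemma esum_ge_term (a : K -> \bar R) k : (forall i, (0 <= a i)%E) ->
  (a k <= \esum_(i in [set: K]) a i)%E.
Proof.
move=> a0; rewrite (esumID [set k]) // setTI esum_set1 //.
by rewrite leeDl // esum_ge0.
Qed.

Lemma weighted_le_lpnorm p m c k : (1 <= p)%E -> 0 <= m k ->
  ((m k * cabs (c k))%:E <= lpnorm p m c)%E.
Proof.
move=> p1 mk0; have x0 : 0 <= m k * cabs (c k) by rewrite mulr_ge0 ?cabs_ge0.
case: p p1 => [r| |] //= p1; last by apply: ereal_sup_ubound; right; exists k.
have r0 : 0 < r by rewrite lee_fin in p1; lra.
have term_le := @esum_ge_term (fun i => ((m i * cabs (c i)) `^ r)%:E) k.
have {}term_le := term_le (fun i => powR_ge0 _ _).
have := @gt0_ler_poweR _ r^-1; rewrite invr_ge0 ltW // => /(_ isT) mono.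
have := mono _ _ _ _ term_le.
rewrite poweR_EFin -powRrM mulfV ?gt_eqF // powRr1 //.
apply; rewrite in_itv /= leey andbT ?lee_fin ?powR_ge0 //.
by rewrite esum_ge0 // => i _; rewrite lee_fin powR_ge0.
Qed.

Lemma in_lp_weighted_bound p m c : (1 <= p)%E -> (forall k, 0 <= m k) ->
  in_lp p m c -> exists2 C0, 0 <= C0 & forall k, m k * cabs (c k) <= C0.
Proof.
move=> p1 m0 hc; have lp_fin := lpnorm_fin_num hc.
exists (fine (lpnorm p m c)); first by rewrite fine_ge0 // lpnorm_ge0.
by move=> k; rewrite -lee_fin fineK //; apply: weighted_le_lpnorm.
Qed.

Lemma in_lp_le p m c d M :
  (lpnorm p m d <= M%:E * lpnorm p m c)%E -> in_lp p m c -> in_lp p m d.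
Proof.
move=> le_dc hc; apply: le_lt_trans le_dc _.
by rewrite -(fineK (lpnorm_fin_num hc)) -EFinM ltry.
Qed.

Definition wmul m c : cseq R K := fun k => cR (m k) * c k.

Lemma wmulK mu : (forall k, 0 < mu k) ->
  cancel (wmul mu) (wmul (fun k => (mu k)^-1)).
Proof.
move=> mu0 x; apply: funext => k; rewrite /wmul cRV mulKf //.
by rewrite cR_eq0 gt_eqF.
Qed.

Lemma wmulKV mu : (forall k, 0 < mu k) ->
  cancel (wmul (fun k => (mu k)^-1)) (wmul mu).
Proof.
move=> mu0 x; apply: funext => k; rewrite /wmul cRV mulVKf //.
by rewrite cR_eq0 gt_eqF.
Qed.

Lemma lpnorm_wmul p m mu x : (forall k, 0 < mu k) ->
  lpnorm p m (wmul mu x) = lpnorm p (fun k => mu k * m k) x.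
Proof.
move=> mu0; apply: eq_lpnorm => k.
by rewrite /wmul cabsM cabsR gtr0_norm // mulrA [m k * _]mulrC.
Qed.

Lemma mxapply_mxconj mu (B : cmatrix R K) x : (forall k, 0 < mu k) ->
  mxapply (mxconj mu B) (wmul mu x) = wmul mu (mxapply B x).
Proof.
move=> mu0; apply: funext => k; rewrite /mxapply /wmul /mxconj -sumKZ.
congr sumK; apply: funext => j.
have : cR (mu j) != 0 by rewrite cR_eq0 gt_eqF.
by rewrite cRV; move=> ?; field.
Qed.

Lemma mxconjK mu (B : cmatrix R K) : (forall k, 0 < mu k) ->
  mxconj (fun k => (mu k)^-1) (mxconj mu B) = B.
Proof.
move=> mu0; apply: funext => i; apply: funext => j; rewrite /mxconj invrK.
have : cR (mu i) != 0 by rewrite cR_eq0 gt_eqF.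
have : cR (mu j) != 0 by rewrite cR_eq0 gt_eqF.
by rewrite cRV; move=> ? ?; field; apply/andP.
Qed.

End WeightedLp.

Section Operators.
Variables (R : realType) (K : countType).
Local Notation C := R[i].
Implicit Types (p : \bar R) (m mu : weight R K) (c x : cseq R K).
Implicit Types (A B : cmatrix R K).

Lemma exists_phase (z : C) : exists u, z * u = cR (cabs z) /\ cabs u <= 1.
Proof.
have [->|z0] := eqVneq z 0; first by exists 0; rewrite mul0r cabs0 /cR.
exists (z^-1 * cR (cabs z)); rewrite mulVKf //; split=> //.
rewrite cabsM cabsV cabsR ger0_norm ?cabs_ge0 // mulVf //.
by apply/eqP => /ComplexField.Normc.eq0_normc; apply/eqP.
Qed.

(* Testing boundedness on l^oo_m against the phases of row [k] of [A],
   rescaled by [1/m], bounds the weighted absolute row sums of [A]. *)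
Lemma bounded_on_infty_row_bound m A : (forall k, 0 < m k) ->
  bounded_on +oo%E m A -> exists2 M, 0 <= M &
  forall k (F : {fset K}), m k * \sum_(j <- F) cabs (A k j) / m j <= M.
Proof.
move=> m0 [M0 hM0]; exists `|M0| => // k F.
have /choice [u hu] := exists_phase.
pose c j : C := if j \in F then u (A k j) * cR (m j)^-1 else 0.
have c_le1 : (lpnorm +oo%E m c <= 1)%E.
  apply: ge_ereal_sup => _ [->|[j _ <-]] //; rewrite lee_fin /c.
  case: ifP => _; last by rewrite cabs0 mulr0.
  rewrite cabsM cabsR ger0_norm ?invr_ge0 ?(ltW (m0 j)) //.
  by rewrite mulrCA mulfV ?gt_eqF // mulr1; case: (hu (A k j)).
have [_ hb] := hM0 c (le_lt_trans c_le1 (ltry _)).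
set S := \sum_(j <- F) _.
have S0 : 0 <= S by rewrite sumr_ge0 // => j _; rewrite divr_ge0 ?cabs_ge0 ?ltW.
have Ac : mxapply A c k = cR S.
  rewrite /mxapply (@sumK_fin _ _ _ F); last first.
    by move=> j jF; rewrite /c (negbTE jF) mulr0.
  rewrite cR_sum big_seq [RHS]big_seq; apply: eq_bigr => j jF.
  by rewrite /c jF mulrA (proj1 (hu _)) cRM cRV.
have := le_trans (weighted_le_lpnorm (mxapply A c) (leey _) (ltW (m0 k))) hb.
have c_fin : lpnorm +oo%E m c \is a fin_num.
  by rewrite ge0_fin_numE ?lpnorm_ge0 // (le_lt_trans c_le1 (ltry _)).
move: c_le1 (lpnorm_ge0 +oo%E m c).
rewrite Ac cabsR ger0_norm // -(fineK c_fin) -EFinM !lee_fin.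
have := ler_norm M0; have := normr_ge0 M0; have := m0 k; nra.
Qed.

Lemma double_sum_row_bound m A B x MA MB C0 k :
  (forall k, 0 < m k) -> 0 <= C0 -> (forall l, m l * cabs (x l) <= C0) ->
  0 <= MB ->
  (forall k (F : {fset K}), m k * \sum_(j <- F) cabs (A k j) / m j <= MA) ->
  (forall k (F : {fset K}), m k * \sum_(j <- F) cabs (B k j) / m j <= MB) ->
  forall F G : {fset K},
  \sum_(j <- F) \sum_(l <- G) cabs (A k j * (B j l * x l))
    <= C0 * MB * (MA / m k).
Proof.
move=> m0 C00 hx MB0 hA hB F G.
have row_j j : \sum_(l <- G) cabs (A k j * (B j l * x l)) <=
    cabs (A k j) / m j * (C0 * MB).
  have Bx_le : \sum_(l <- G) cabs (B j l) * cabs (x l) <=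
      C0 * \sum_(l <- G) cabs (B j l) / m l.
    rewrite mulr_sumr; apply: ler_sum => l _.
    by rewrite mulrCA ler_wpM2l ?cabs_ge0 // ler_pdivlMr // mulrC.
  have B_le : \sum_(l <- G) cabs (B j l) / m l <= MB / m j.
    by rewrite ler_pdivlMr // mulrC.
  have -> : \sum_(l <- G) cabs (A k j * (B j l * x l)) =
      cabs (A k j) * \sum_(l <- G) cabs (B j l) * cabs (x l).
    by rewrite mulr_sumr; apply: eq_bigr => l _; rewrite !cabsM.
  have -> : cabs (A k j) / m j * (C0 * MB) = cabs (A k j) * (C0 * (MB / m j)).
    by rewrite mulrAC -!mulrA; congr (_ * (_ * _)); rewrite mulrC.
  rewrite ler_wpM2l ?cabs_ge0 //; apply: le_trans Bx_le _.
  by rewrite ler_wpM2l.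
apply: le_trans (ler_sum _ (fun j _ => row_j j)) _.
rewrite -mulr_suml mulrC ler_wpM2l ?mulr_ge0 //.
by rewrite ler_pdivlMr // mulrC.
Qed.

(* The row bounds make the double series absolutely summable, so the order
   of summation can be exchanged. *)
Lemma mxapply_mxmul m A B x C0 : (forall k, 0 < m k) ->
  bounded_on +oo%E m A -> bounded_on +oo%E m B ->
  0 <= C0 -> (forall l, m l * cabs (x l) <= C0) ->
  mxapply A (mxapply B x) = mxapply (mxmul A B) x.
Proof.
move=> m0 bA bB C00 hx; apply: funext => k.
have [MA _ hA] := bounded_on_infty_row_bound m0 bA.
have [MB MB0 hB] := bounded_on_infty_row_bound m0 bB.
rewrite /mxapply /mxmul.
transitivity (sumK (fun j => sumK (fun l => A k j * (B j l * x l)))).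
  by congr sumK; apply: funext => j; rewrite sumKZ.
rewrite (sumK_exchange (double_sum_row_bound k m0 C00 hx MB0 hA hB)).
congr sumK; apply: funext => l; rewrite -sumKZr.
by congr sumK; apply: funext => j; rewrite mulrA.
Qed.

Lemma mxapply_mxid x : mxapply (fun k l => (k == l)%:R) x = x.
Proof.
apply: funext => k; rewrite /mxapply (@sumK_fin _ _ _ [fset k]%fset).
  by rewrite big_seq_fset1 eqxx mul1r.
by move=> l; rewrite inE eq_sym => /negbTE ->; rewrite mul0r.
Qed.

Lemma mxapply_delta A l : mxapply A (fun i => (i == l)%:R) = A^~ l.
Proof.
apply: funext => k; rewrite /mxapply (@sumK_fin _ _ _ [fset l]%fset).
  by rewrite big_seq_fset1 eqxx mulr1.
by move=> i; rewrite inE => /negbTE ->; rewrite mulr0.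
Qed.

Lemma in_lp2_delta (l : K) : in_lp 2%:E (fun _ => 1) (fun i => (i == l)%:R : C).
Proof.
rewrite /in_lp /=; apply: poweR_lty.
rewrite (esumID [set l]); last by move=> i _; rewrite lee_fin powR_ge0.
rewrite setTI esum_set1 ?lee_fin ?powR_ge0 // esum1 ?adde0 ?ltry // => i [_ /=].
by move/eqP/negbTE => ->; rewrite cabs0 mulr0 powR0.
Qed.

Lemma mxmul_eq_mxid A B :
  (forall c, in_lp 2%:E (fun _ => 1) c -> mxapply A (mxapply B c) = c) ->
  mxmul A B = fun k l => (k == l)%:R.
Proof.
move=> AB; apply: funext => k; apply: funext => l.
by have := congr1 (@^~ k) (AB _ (in_lp2_delta l)); rewrite mxapply_delta.
Qed.

Lemma mxapply_left_inverse p m A B y : (1 <= p)%E -> (forall k, 0 < m k) ->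
  bounded_on +oo%E m A -> bounded_on +oo%E m B ->
  mxmul A B = (fun k l => (k == l)%:R) -> in_lp p m y ->
  mxapply A (mxapply B y) = y.
Proof.
move=> p1 m0 bA bB AB hy.
have [C0 C00 hC0] := in_lp_weighted_bound p1 (fun k => ltW (m0 k)) hy.
by rewrite (mxapply_mxmul m0 bA bB C00 hC0) AB mxapply_mxid.
Qed.

Lemma invertible_on_of_inverse p m A A' :
  bounded_on p m A -> bounded_on p m A' ->
  (forall y, in_lp p m y -> mxapply A' (mxapply A y) = y) ->
  (forall y, in_lp p m y -> mxapply A (mxapply A' y) = y) ->
  invertible_on p m A.
Proof.
move=> bA [MA' hA'] A'A AA'; split=> //; exists (mxapply A'); split; [|split].
- move=> d hd; split; last exact: AA'.
  by have [_ /in_lp_le] := hA' d hd; apply.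
- exact: A'A.
- by exists MA' => d /hA' [].
Qed.

Lemma bounded_on_mxconj p m mu B : (forall k, 0 < mu k) ->
  bounded_on p m (mxconj mu B) -> bounded_on p (fun k => mu k * m k) B.
Proof.
move=> mu0 [M hM]; exists M => c hc.
have hy : in_lp p m (wmul mu c) by rewrite /in_lp lpnorm_wmul.
have [hs hb] := hM _ hy; split.
  move=> k; have := abs_summableZ (cR (mu k))^-1 (hs k).
  congr abs_summable; apply: funext => j; rewrite /mxconj /wmul cRV.
  have : cR (mu k) != 0 by rewrite cR_eq0 gt_eqF.
  have : cR (mu j) != 0 by rewrite cR_eq0 gt_eqF.
  by move=> ? ?; field; apply/andP.
by rewrite -!lpnorm_wmul // -mxapply_mxconj.
Qed.

Lemma invertible_on_mxconj p m mu B : (forall k, 0 < mu k) ->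
  invertible_on p m (mxconj mu B) -> invertible_on p (fun k => mu k * m k) B.
Proof.
move=> mu0 [bBm [T [hT [TBm [MT hMT]]]]].
have in_lp_wmul c : in_lp p (fun k => mu k * m k) c -> in_lp p m (wmul mu c).
  by rewrite /in_lp lpnorm_wmul.
have lpnorm_wmulV d :
    lpnorm p (fun k => mu k * m k) (wmul (fun k => (mu k)^-1) d) = lpnorm p m d.
  by rewrite -lpnorm_wmul // wmulKV.
split; first exact: bounded_on_mxconj.
exists (fun d => wmul (fun k => (mu k)^-1) (T (wmul mu d))); split; [|split].
- move=> d /in_lp_wmul /hT [hTd BmTd].
  split; first by rewrite /in_lp lpnorm_wmulV.
  by apply: (can_inj (wmulK mu0)); rewrite -mxapply_mxconj // wmulKV.
- by move=> c /in_lp_wmul hc; rewrite -mxapply_mxconj // TBm // wmulK.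
- exists MT => d /in_lp_wmul hd.
  by rewrite lpnorm_wmulV -lpnorm_wmul //; apply: hMT.
Qed.

Lemma invertible_on_mxconjV p m mu B : (forall k, 0 < mu k) ->
  invertible_on p (fun k => mu k * m k) B -> invertible_on p m (mxconj mu B).
Proof.
move=> mu0; rewrite -{1}(mxconjK B mu0) => /invertible_on_mxconj.
have muV0 k : 0 < (mu k)^-1 by rewrite invr_gt0.
move=> /(_ muV0); congr invertible_on; apply: funext => k.
by rewrite mulrA mulVf ?mul1r // gt_eqF.
Qed.

End Operators.

Unset Implicit Arguments.
Set Strict Implicit.

Theorem mainTheorem1 (R : realType) (K : countType)
    (Alg : set (cmatrix R K)) (N : cmatrix R K -> R) (W : set (weight R K))
    (mu : weight R K) (B : cmatrix R K) :
  ARI_algebra Alg N W -> W mu ->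
  Alg (mxconj mu B) ->
  invertible_on 2%:E mu B ->
  (forall (p : \bar R) (m : weight R K), (1 <= p)%E -> W m ->
     invertible_on p (fun k => mu k * m k) B) /\
  (forall p : \bar R, (1 <= p)%E -> invertible_on p (fun _ => 1) B).
Proof.
move=> ari Wmu AlgBm invB; have mu0 := ari_weights_pos ari Wmu.
set Bm := mxconj mu B in AlgBm.
have invBm : invertible_on 2%:E (fun _ => 1) Bm.
  by apply: invertible_on_mxconjV => //; under eq_fun do rewrite mulr1.
have [A' [AlgA' inv_A']] := ari_inverse_closed ari AlgBm invBm.
have A'Bm := mxmul_eq_mxid (fun c hc => proj1 (inv_A' c hc)).
have BmA' := mxmul_eq_mxid (fun c hc => proj2 (inv_A' c hc)).
have inv_weighted p m :
    (1 <= p)%E -> W m -> invertible_on p (fun k => mu k * m k) B.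
  move=> p1 Wm; have m0 := ari_weights_pos ari Wm.
  have bounded q A : (1 <= q)%E -> Alg A -> bounded_on q m A :=
    fun q1 AlgA => ari_bounded ari AlgA q1 Wm.
  have [bBm bA'] := (bounded _ _ (leey _) AlgBm, bounded _ _ (leey _) AlgA').
  apply: invertible_on_mxconj => //.
  apply: (invertible_on_of_inverse (bounded _ _ p1 AlgBm) (bounded _ _ p1 AlgA')).
  - by move=> y; apply: mxapply_left_inverse p1 m0 bA' bBm A'Bm.
  - by move=> y; apply: mxapply_left_inverse p1 m0 bBm bA' BmA'.
split=> // p p1; have := inv_weighted p _ p1 (ari_inv ari Wmu).
by congr invertible_on; apply: funext => k; rewrite mulfV // gt_eqF.
Qed.
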